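(* Let $n\ge 3$ and let $CH_n$ be the closed Helm graph. Then $$\chi^+(CH_n)=\begin{cases}5n+1 & \text{if } n \text{ is even},\\ 7n-2 & \text{if } n \text{ is odd}.\end{cases}$$
   Context: The closed Helm graph $CH_n$ has vertices $v, v_1,\dots,v_n,u_1,\dots,u_n$; $v_1\dots v_n$ form a cycle, $u_1\dots u_n$ form a cycle (in this order), $v$ is adjacent to every $v_i$, and $u_i$ is adjacent to $v_i$ for each $i$ (i.e. the Helm graph with its pendant vertices joined into an outer cycle). For a proper colouring $c:V(G)\to\{1,\dots,k\}$ (colour $c_i$ identified with $i$), the colouring sum is $\sum_{i=1}^k i\,\theta(c_i)=\sum_v c(v)$, $\theta(c_i)$ the number of vertices of colour $c_i$. The $\chi^+$-chromatic sum $\chi^+(G)$ is the maximum colouring sum over all proper colourings $c:V(G)\to\{1,\dots,\chi(G)\}$, $\chi(G)$ the chromatic number. *)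

From mathcomp Require Import all_boot.
Set Implicit Arguments. Unset Strict Implicit. Unset Printing Implicit Defensive.

Section Colouring.
Variable T : finType.
Variable e : rel T.

(* c is a proper colouring with colours 'I_k (colour j stands for colour j+1) *)
Definition proper_colouring (k : nat) (c : {ffun T -> 'I_k}) : bool :=
  [forall x, forall y, e x y ==> (c x != c y)].

Definition colourable (k : nat) : bool :=
  [exists c : {ffun T -> 'I_k}, proper_colouring c].

(* chromatic number: least k (searched in 0..#|T|) with a proper k-colouring;
   for a loopless graph #|T| colours always suffice, so this is the minimum. *)
Definition chromatic_number : nat := find colourable (iota 0 #|T|.+1).

Definition colouring_sum (k : nat) (c : {ffun T -> 'I_k}) : nat :=
  \sum_(x : T) (c x).+1.

Definition chi_plus : nat :=
  \max_(c : {ffun T -> 'I_chromatic_number} | proper_colouring c)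
     colouring_sum c.
End Colouring.

(* Closed Helm graph CH_n.
   None = hub v, Some (inl i) = v_{i+1}, Some (inr i) = u_{i+1}. *)
Definition helm_vertex (n : nat) : finType := option ('I_n + 'I_n)%type.

Definition cyc_adj (n : nat) (i j : 'I_n) : bool :=
  (j == i.+1 %% n :> nat) || (i == j.+1 %% n :> nat).

Definition helm_adj (n : nat) : rel (helm_vertex n) :=
  fun x y =>
    match x, y with
    | None, Some (inl _) => true
    | Some (inl _), None => true
    | Some (inl i), Some (inl j) => cyc_adj i j
    | Some (inr i), Some (inr j) => cyc_adj i j
    | Some (inl i), Some (inr j) => i == j
    | Some (inr i), Some (inl j) => i == j
    | _, _ => false
    end.

From mathcomp Require Import all_boot zify.
Set Implicit Arguments. Unset Strict Implicit. Unset Printing Implicit Defensive.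

(* In a proper colouring of an n-cycle every colour class has at most n/2
   vertices, and an odd cycle needs a third colour.  So if a > b > c are the
   largest colours available on a cycle, twice its colour sum is at most
   n(a + b), and at most n(a + b) - (a - b) - 2(b - c) when n is odd.  The
   inner cycle v_1 ... v_n must avoid the colour of the hub v, so summing these
   bounds for both cycles over the possible hub colours bounds chi^+(CH_n); the
   bound is attained by letting both cycles alternate the two largest colours
   (with one vertex recoloured on each cycle when n is odd).  The chromatic
   number is 3 for even n, since v, v_1, v_2 form a triangle, and 4 for odd n,
   since the odd cycle of the v_i cannot be coloured with the two colours
   left by the hub. *)

Section BigOption.
Variables (R : Type) (idx : R) (op : Monoid.com_law idx) (T : finType).

Lemma big_option (F : option T -> R) :
  \big[op/idx]_x F x = op (F None) (\big[op/idx]_y F (Some y)).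
Proof.
rewrite (bigD1 None) //=; congr (op _ _).
rewrite (reindex_omap Some id) /=; last by case.
by apply: eq_bigl => y; rewrite eqxx.
Qed.

End BigOption.

Lemma odd_predn n : 0 < n -> odd n.-1 = ~~ odd n.
Proof. by case: n => //= n _; rewrite negbK. Qed.

Section ChromaticSum.
Variables (T : finType) (e : rel T).

Lemma triangle_not_colourable x y z k :
  e x y -> e y z -> e x z -> k < 3 -> ~~ colourable e k.
Proof.
move=> xy yz xz lt_k; apply/existsP => -[c /forallP proper_c].
have adj u v : e u v -> (c u : nat) != c v.
  by move=> uv; have /forallP/(_ v)/implyP/(_ uv) := proper_c u.
have := adj _ _ xy; have := adj _ _ yz; have := adj _ _ xz.
have := ltn_ord (c x); have := ltn_ord (c y); have := ltn_ord (c z).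
lia.
Qed.

Lemma chromatic_number_eq k : k <= #|T| ->
  (forall j, j < k -> ~~ colourable e j) -> colourable e k -> chromatic_number e = k.
Proof.
move=> le_k not_col col_k; rewrite /chromatic_number -(subnKC (leqW le_k)) iotaD.
rewrite find_cat size_iota add0n.
case: hasP => [[j] | _]; last by rewrite subSn //= col_k addn0.
by rewrite mem_iota add0n => /andP[_ /not_col/negbTE ->].
Qed.

Lemma chi_plus_eq k s : chromatic_number e = k ->
  (forall c : {ffun T -> 'I_k}, proper_colouring e c -> colouring_sum c <= s) ->
  (exists2 c : {ffun T -> 'I_k}, proper_colouring e c & colouring_sum c = s) ->
  chi_plus e = s.
Proof.
rewrite /chi_plus => -> le_s [c proper_c sum_c]; apply/eqP; rewrite eqn_leq.
apply/andP; split; first exact/bigmax_leqP.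
by rewrite -sum_c; apply: (leq_bigmax_cond (F := @colouring_sum T _)).
Qed.

End ChromaticSum.

Lemma card_set_sum (T : finType) (P : pred T) : #|[set x | P x]| = \sum_x P x.
Proof.
by rewrite -sum1_card big_mkcond; apply: eq_bigr => x _; rewrite inE; case: (P x).
Qed.

Lemma sum_le_colour_classes n (f : 'I_n -> nat) a b c :
  c <= b -> b <= a -> (forall i, f i <= a) -> (forall i, f i != a -> f i <= b) ->
  (forall i, f i != a -> f i != b -> f i <= c) ->
  \sum_i f i + (b - c) * #|[set i | f i \notin [:: a; b]]|
    <= n * b + (a - b) * #|[set i | f i == a]|.
Proof.
move=> cb ba le_a le_b le_c.
rewrite !card_set_sum !big_distrr -big_split /=.
rewrite -[n in n * b]card_ord -sum_nat_const -big_split /=.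
apply: leq_sum => i _; have := le_a i; have := le_b i; have := le_c i.
rewrite !inE; case: (f i =P a) => [-> _ _ _|_]; first by lia.
by case: (f i =P b) => [->|_] /=; lia.
Qed.

Definition cycle_proper n (f : 'I_n -> nat) : Prop := forall i, f i != f (ordS i).

Lemma cycle_proper_nat n (g : nat -> nat) :
  (forall x, x.+1 < n -> g x != g x.+1) -> g n.-1 != g 0 ->
  cycle_proper (fun i : 'I_n => g i).
Proof.
move=> step wrap i /=; case: (ltnP i.+1 n) => [lt_i | ge_i].
  by rewrite modn_small //; apply: step.
have -> : (i : nat) = n.-1 by have := ltn_ord i; lia.
by rewrite prednK ?modnn // (leq_ltn_trans _ (ltn_ord i)).
Qed.

Section CycleColouring.
Variables (n : nat) (f : 'I_n -> nat).
Hypothesis f_proper : cycle_proper f.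

Lemma card_colour_class_cycle a : 2 * #|[set i | f i == a]| <= n.
Proof.
set A := [set i | f i == a].
have disjA : A :&: (@ordS n) @: A = set0.
  apply/setP => i; rewrite !inE; apply/negP => /andP[/eqP fi].
  case/imsetP => j; rewrite inE => /eqP fj ei.
  by move: (f_proper j); rewrite -ei fi fj eqxx.
have := cardsU A ((@ordS n) @: A).
rewrite (card_imset _ (@ordS_inj n)) disjA cards0.
have := subset_leq_card (subsetT (A :|: (@ordS n) @: A)); rewrite cardsT card_ord.
lia.
Qed.

Lemma odd_cycle_third_colour a b : odd n -> 0 < #|[set i | f i \notin [:: a; b]]|.
Proof.
move=> odd_n; rewrite card_gt0; apply/set0Pn.
apply/existsP; apply: contraT; rewrite negb_exists => /forallP all_ab.
set A := [set i | f i == a]; set B := [set i | f i == b].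
have cover : [set: 'I_n] \subset A :|: B.
  apply/subsetP => i _; move: (all_ab i); rewrite !inE.
  by case: (f i == a); case: (f i == b).
have := subset_leq_card cover; rewrite cardsT card_ord cardsU.
have := card_colour_class_cycle a; have := card_colour_class_cycle b.
have := odd_double_half n; rewrite odd_n -mul2n /=.
move: n./2 #|A| #|B| #|A :&: B| => m x y z; lia.
Qed.

Lemma cycle_sum_le a b : b <= a ->
  (forall i, f i <= a) -> (forall i, f i != a -> f i <= b) ->
  2 * \sum_i f i <= n * (a + b).
Proof.
move=> ba le_a le_b; have le_c i (ne_a : f i != a) (_ : f i != b) := le_b i ne_a.
have := sum_le_colour_classes (leqnn b) ba le_a le_b le_c.
have := card_colour_class_cycle a; move: #|_| => x card_x.
have := leq_mul (leqnn (a - b)) card_x.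
have := subnKC ba; move: (a - b) => d <-.
lia.
Qed.

Lemma odd_cycle_sum_le a b c : odd n -> c <= b -> b <= a ->
  (forall i, f i <= a) -> (forall i, f i != a -> f i <= b) ->
  (forall i, f i != a -> f i != b -> f i <= c) ->
  2 * \sum_i f i + (a - b) + 2 * (b - c) <= n * (a + b).
Proof.
move=> odd_n cb ba le_a le_b le_c.
have := sum_le_colour_classes cb ba le_a le_b le_c.
have := odd_cycle_third_colour a b odd_n; move: #|_| => y y_gt0.
have := card_colour_class_cycle a; move: #|_| => x card_x.
have [m n_eq] : exists m, n = m.*2.+1.
  by exists n./2; rewrite -[LHS]odd_double_half odd_n.
have x_le_m : x <= m by lia.
have := leq_mul (leqnn (a - b)) x_le_m; have := leq_mul (leqnn (b - c)) y_gt0.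
have := subnKC ba; move: (a - b) (\sum_i f i) => d s <-.
rewrite n_eq -!mul2n; lia.
Qed.

End CycleColouring.

Lemma cyc_adjP n (i j : 'I_n) : cyc_adj i j -> j = ordS i \/ i = ordS j.
Proof. by case/orP=> /eqP e; [left | right]; apply: val_inj. Qed.

Section HelmColouring.
Variables (n k : nat) (c : {ffun helm_vertex n -> 'I_k}).

Definition hub_colour : nat := c None.
Definition inner_colour (i : 'I_n) : nat := c (Some (inl i)).
Definition outer_colour (i : 'I_n) : nat := c (Some (inr i)).

Lemma proper_helmP : proper_colouring (@helm_adj n) c <->
  [/\ cycle_proper inner_colour, cycle_proper outer_colour,
      forall i, inner_colour i != hub_colour & forall i, inner_colour i != outer_colour i].
Proof.
split.
  move=> /forallP proper_c.
  have adj x y : helm_adj x y -> (c x : nat) != c y.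
    by move=> xy; have /forallP/(_ y)/implyP/(_ xy) := proper_c x.
  by split=> i; apply: adj; rewrite //= /cyc_adj eqxx.
case=> inner_p outer_p inner_hub inner_outer.
apply/forallP => x; apply/forallP => y; apply/implyP; rewrite -val_eqE.
case: x y => [[i|i]|] [[j|j]|] //=.
- by case/cyc_adjP=> ->; [|rewrite eq_sym]; apply: inner_p.
- by move=> /eqP ->; apply: inner_outer.
- by move=> _; apply: inner_hub.
- by move=> /eqP ->; rewrite eq_sym; apply: inner_outer.
- by case/cyc_adjP=> ->; [|rewrite eq_sym]; apply: outer_p.
- by move=> _; rewrite eq_sym; apply: inner_hub.
Qed.

Lemma colouring_sum_helm : colouring_sum c =
  hub_colour + \sum_i inner_colour i + \sum_i outer_colour i + (2 * n + 1).
Proof.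
rewrite /colouring_sum /hub_colour /inner_colour /outer_colour.
rewrite (eq_bigr (fun x => (c x : nat) + 1)) => [|x _]; last by rewrite addn1.
rewrite big_split /= sum_nat_const card_option card_sum card_ord muln1.
rewrite big_option big_sumType /=; lia.
Qed.

End HelmColouring.

Lemma colouring_sum_helm_le3 n (c : {ffun helm_vertex n -> 'I_3}) :
  0 < n -> proper_colouring (@helm_adj n) c -> colouring_sum c <= 5 * n + 1.
Proof.
move=> n_gt0 /proper_helmP[inner_p outer_p inner_hub _]; rewrite colouring_sum_helm.
have lt_h : hub_colour c < 3 := ltn_ord _.
have lt_v i : inner_colour c i < 3 := ltn_ord _.
have lt_u i : outer_colour c i < 3 := ltn_ord _.
have sum_u : 2 * \sum_i outer_colour c i <= n * (2 + 1).
  by apply: cycle_sum_le => // i; have := lt_u i; lia.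
have [h0|[h1|h2]] : hub_colour c = 0 \/ hub_colour c = 1 \/ hub_colour c = 2 by lia.
- have : 2 * \sum_i inner_colour c i <= n * (2 + 1).
    by apply: cycle_sum_le => // i; have := lt_v i; lia.
  lia.
- have : 2 * \sum_i inner_colour c i <= n * (2 + 0).
    by apply: cycle_sum_le => // i; have := lt_v i; have := inner_hub i; lia.
  lia.
- have : 2 * \sum_i inner_colour c i <= n * (1 + 0).
    by apply: cycle_sum_le => // i; have := lt_v i; have := inner_hub i; lia.
  lia.
Qed.

Lemma colouring_sum_helm_le4 n (c : {ffun helm_vertex n -> 'I_4}) :
  3 <= n -> odd n -> proper_colouring (@helm_adj n) c -> colouring_sum c <= 7 * n - 2.
Proof.
move=> n_ge3 odd_n /proper_helmP[inner_p outer_p inner_hub _]; rewrite colouring_sum_helm.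
have lt_h : hub_colour c < 4 := ltn_ord _.
have lt_v i : inner_colour c i < 4 := ltn_ord _.
have lt_u i : outer_colour c i < 4 := ltn_ord _.
have sum_u : 2 * \sum_i outer_colour c i + (3 - 2) + 2 * (2 - 1) <= n * (3 + 2).
  by apply: odd_cycle_sum_le => // i; have := lt_u i; lia.
have [h0|[h1|[h2|h3]]] :
  hub_colour c = 0 \/ hub_colour c = 1 \/ hub_colour c = 2 \/ hub_colour c = 3 by lia.
- have : 2 * \sum_i inner_colour c i + (3 - 2) + 2 * (2 - 1) <= n * (3 + 2).
    by apply: odd_cycle_sum_le => // i; have := lt_v i; have := inner_hub i; lia.
  lia.
- have : 2 * \sum_i inner_colour c i + (3 - 2) + 2 * (2 - 0) <= n * (3 + 2).
    by apply: odd_cycle_sum_le => // i; have := lt_v i; have := inner_hub i; lia.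
  lia.
- have : 2 * \sum_i inner_colour c i + (3 - 1) + 2 * (1 - 0) <= n * (3 + 1).
    by apply: odd_cycle_sum_le => // i; have := lt_v i; have := inner_hub i; lia.
  lia.
- have : 2 * \sum_i inner_colour c i + (2 - 1) + 2 * (1 - 0) <= n * (2 + 1).
    by apply: odd_cycle_sum_le => // i; have := lt_v i; have := inner_hub i; lia.
  lia.
Qed.

Section HelmColouringOfFunctions.
Variables (n k h : nat) (fv fu : nat -> nat).
Hypotheses (h_le : h <= k) (fv_le : forall i, fv i <= k) (fu_le : forall i, fu i <= k).

Definition helm_colouring : {ffun helm_vertex n -> 'I_k.+1} :=
  [ffun x : helm_vertex n =>
     inord (match x with None => h | Some (inl i) => fv i | Some (inr i) => fu i end)].

Lemma hub_colour_helm : hub_colour helm_colouring = h.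
Proof. by rewrite /hub_colour /helm_colouring ffunE inordK. Qed.

Lemma inner_colour_helm i : inner_colour helm_colouring i = fv i.
Proof. by rewrite /inner_colour /helm_colouring ffunE inordK ?ltnS. Qed.

Lemma outer_colour_helm i : outer_colour helm_colouring i = fu i.
Proof. by rewrite /outer_colour /helm_colouring ffunE inordK ?ltnS. Qed.

Lemma proper_helm_colouring :
  cycle_proper (fun i : 'I_n => fv i) -> cycle_proper (fun i : 'I_n => fu i) ->
  (forall i, fv i != h) -> (forall i, fv i != fu i) ->
  proper_colouring (@helm_adj n) helm_colouring.
Proof.
move=> v_p u_p v_h v_u; apply/proper_helmP.
by split=> i; rewrite ?hub_colour_helm ?inner_colour_helm ?outer_colour_helm.
Qed.

Lemma colouring_sum_helm_colouring :
  colouring_sum helm_colouring = h + \sum_(i < n) (fv i + fu i) + (2 * n + 1).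
Proof.
rewrite colouring_sum_helm hub_colour_helm big_split /= !addnA.
by rewrite (eq_bigr _ (fun i _ => inner_colour_helm i)) (eq_bigr _ (fun i _ => outer_colour_helm i)).
Qed.

End HelmColouringOfFunctions.

Definition even_helm_colouring n :=
  @helm_colouring n 2 0 (fun i => 2 - odd i) (fun i => (odd i).+1).

Lemma proper_even_helm_colouring n : 0 < n -> ~~ odd n ->
  proper_colouring (@helm_adj n) (even_helm_colouring n).
Proof.
move=> n_gt0 even_n; apply: proper_helm_colouring => // [i|i|||i|i].
- exact: leq_subr.
- by case: (odd i).
- apply: (cycle_proper_nat (g := fun i => 2 - odd i)) => [x _|].
    by rewrite oddS; case: (odd x).
  by rewrite odd_predn // even_n.
- apply: (cycle_proper_nat (g := fun i => (odd i).+1)) => [x _|].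
    by rewrite oddS; case: (odd x).
  by rewrite odd_predn // even_n.
- by case: (odd i).
- by case: (odd i).
Qed.

Lemma colouring_sum_even_helm_colouring n : colouring_sum (even_helm_colouring n) = 5 * n + 1.
Proof.
rewrite colouring_sum_helm_colouring // => [|i|i]; last by case: (odd i).
  rewrite (eq_bigr (fun=> 3)) => [|i _]; last by case: (odd i).
  by rewrite sum_nat_const card_ord; lia.
exact: leq_subr.
Qed.

Definition odd_helm_colouring n :=
  @helm_colouring n 3 0 (fun i => if i == n.-1 then 1 else 3 - odd i)
                        (fun i => if i == 0 then 1 else (odd i).+2).

Lemma proper_odd_helm_colouring n : 3 <= n -> odd n ->
  proper_colouring (@helm_adj n) (odd_helm_colouring n).
Proof.
move=> n_ge3 odd_n; have even_pred : odd n.-1 = false by rewrite odd_predn ?odd_n //; lia.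
apply: proper_helm_colouring => // [i|i|||i|i].
- by case: ifP => //; case: (odd i).
- by case: ifP => //; case: (odd i).
- apply: (cycle_proper_nat (g := fun i => if i == n.-1 then 1 else 3 - odd i)) => [x lt_x|].
    by rewrite oddS; case: (x =P n.-1); case: (x.+1 =P n.-1); case: (odd x) => /=; lia.
  by rewrite eqxx; case: (0 =P n.-1) => /=; lia.
- apply: (cycle_proper_nat (g := fun i => if i == 0 then 1 else (odd i).+2)) => [x _|].
    by rewrite oddS; case: (x =P 0); case: (odd x).
  by rewrite even_pred; case: (n.-1 =P 0) => /=; lia.
- by case: (i =P n.-1) => _ //; case: (odd i).
- case: (eqVneq i n.-1) => [->|_]; first by rewrite even_pred; case: (n.-1 =P 0) => /=; lia.
  by case: (i =P 0) => _ //; case: (odd i).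
Qed.

Lemma colouring_sum_odd_helm_colouring n : 3 <= n -> odd n ->
  colouring_sum (odd_helm_colouring n) = 7 * n - 2.
Proof.
move=> n_ge3 odd_n.
rewrite colouring_sum_helm_colouring // => [|i|i]; first last.
- by case: ifP => //; case: (odd i).
- by case: ifP => //; case: (odd i).
have [m n_eq] : exists m, n = m.+2 by exists n.-2; lia.
rewrite n_eq big_ord_recl big_ord_recr /=.
rewrite (eq_bigr (fun=> 5)) => [|i _]; last first.
  by rewrite /bump leq0n add0n eqSS ltn_eqF //; case: (odd i).
have odd_m : odd m by move: odd_n; rewrite n_eq /= negbK.
rewrite /bump leq0n add0n eqxx odd_m sum_nat_const card_ord /=; lia.
Qed.

Lemma card_helm_vertex n : #|helm_vertex n| = (2 * n).+1.
Proof. by rewrite card_option card_sum card_ord addnn mul2n. Qed.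

Lemma helm_not_colourable_lt3 n k : 1 < n -> k < 3 -> ~~ colourable (@helm_adj n) k.
Proof.
move=> n_gt1; have n_gt0 := ltnW n_gt1.
apply: (@triangle_not_colourable _ _ (Some (inl (Ordinal n_gt0))) None (Some (inl (Ordinal n_gt1)))) => //.
by rewrite /= /cyc_adj /= modn_small.
Qed.

Lemma odd_helm_not_3_colourable n : odd n -> ~~ colourable (@helm_adj n) 3.
Proof.
move=> odd_n; apply/existsP => -[c /proper_helmP[inner_p _ inner_hub _]].
have := odd_cycle_third_colour inner_p ((hub_colour c).+1 %% 3) ((hub_colour c).+2 %% 3) odd_n.
rewrite card_gt0 => /set0Pn[i]; rewrite !inE.
have : hub_colour c < 3 := ltn_ord _; have : inner_colour c i < 3 := ltn_ord _.
have := inner_hub i; lia.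
Qed.

Lemma chromatic_number_even_helm n : 1 < n -> ~~ odd n -> chromatic_number (@helm_adj n) = 3.
Proof.
move=> n_gt1 even_n; apply: chromatic_number_eq => [|j|].
- by rewrite card_helm_vertex; lia.
- exact: helm_not_colourable_lt3.
- by apply/existsP; exists (even_helm_colouring n); apply: proper_even_helm_colouring; lia.
Qed.

Lemma chromatic_number_odd_helm n : 3 <= n -> odd n -> chromatic_number (@helm_adj n) = 4.
Proof.
move=> n_ge3 odd_n; apply: chromatic_number_eq => [|j|].
- by rewrite card_helm_vertex; lia.
- rewrite ltnS leq_eqVlt => /orP[/eqP -> | lt_j]; first exact: odd_helm_not_3_colourable.
  by apply: helm_not_colourable_lt3; lia.
- by apply/existsP; exists (odd_helm_colouring n); apply: proper_odd_helm_colouring.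
Qed.

Theorem theorem2p10 (n : nat) (hn : 3 <= n) :
  chi_plus (@helm_adj n) = (if odd n then 7 * n - 2 else 5 * n + 1).
Proof.
case: ifP => [odd_n | /negbT even_n].
  apply: chi_plus_eq (chromatic_number_odd_helm hn odd_n) _ _ => [c|].
    exact: colouring_sum_helm_le4.
  exists (odd_helm_colouring n); first exact: proper_odd_helm_colouring.
  exact: colouring_sum_odd_helm_colouring.
have n_gt0 : 0 < n by lia.
apply: chi_plus_eq (chromatic_number_even_helm (ltnW hn) even_n) _ _ => [c|].
  exact: colouring_sum_helm_le3.
exists (even_helm_colouring n); first exact: proper_even_helm_colouring.
exact: colouring_sum_even_helm_colouring.
Qed.
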